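(* Let $D$ be a cone, let $\varphi\colon D\to\overline{\mathbb{R}}_+$ be a sublinear functional, and let $\psi_1,\dots,\psi_n\colon D\to\overline{\mathbb{R}}_+$ ($n\ge1$) be linear functionals such that $\min(\psi_1(x),\dots,\psi_n(x))\le\varphi(x)$ for all $x\in D$. Then there are nonnegative real numbers $a_1,\dots,a_n$ with $\sum_{i=1}^n a_i=1$ such that for all $x\in D$ \[\min(\psi_1(x),\dots,\psi_n(x))\;\le\;\sum_{i=1}^n a_i\psi_i(x)\;\le\;\varphi(x).\]
   Context: $\overline{\mathbb{R}}_+=[0,+\infty)\cup\{+\infty\}$ with the usual order and arithmetic extended by $r+\infty=+\infty$, $r\cdot(+\infty)=+\infty$ for $r>0$, $0\cdot(+\infty)=0$. A cone is a commutative monoid $(C,+,0)$ with a scalar multiplication $[0,\infty)\times C\to C$ satisfying $r(x+y)=rx+ry$, $(r+s)x=rx+sx$, $(rs)x=r(sx)$, $1x=x$, $0x=0$ (no cancellation or additive inverses required). A functional is a map $\varphi\colon C\to\overline{\mathbb{R}}_+$. It is homogeneous if $\varphi(ra)=r\varphi(a)$ for all $a\in C$, $r\in[0,\infty)$; additive if $\varphi(a+b)=\varphi(a)+\varphi(b)$; subadditive if $\varphi(a+b)\le\varphi(a)+\varphi(b)$; linear = homogeneous and additive; sublinear = homogeneous and subadditive. *)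

From Stdlib Require Import Reals.
Open Scope R_scope.

(* Extended reals [-oo excluded]: finite values or +oo.  Functionals are
   required to take values in [0,+oo] via [nonneg_functional]. *)
Inductive ereal : Type := Fin (r : R) | Inf.

Definition ele (x y : ereal) : Prop :=
  match x, y with
  | _, Inf => True
  | Inf, Fin _ => False
  | Fin a, Fin b => a <= b
  end.

Definition eadd (x y : ereal) : ereal :=
  match x, y with
  | Fin a, Fin b => Fin (a + b)
  | _, _ => Inf
  end.

(* scalar r >= 0 times extended value, with 0 * +oo = 0 *)
Definition emul (r : R) (x : ereal) : ereal :=
  match x with
  | Fin a => Fin (r * a)
  | Inf => if Rlt_dec 0 r then Inf else Fin 0
  end.

Definition emin (x y : ereal) : ereal :=
  match x, y with
  | Inf, _ => y
  | _, Inf => x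
  | Fin a, Fin b => Fin (Rmin a b)
  end.

(* min of f 0, ..., f (n-1)  (Inf for n = 0, the neutral element) *)
Fixpoint emin_n (f : nat -> ereal) (n : nat) : ereal :=
  match n with
  | O => Inf
  | S k => emin (emin_n f k) (f k)
  end.

Fixpoint esum_n (f : nat -> ereal) (n : nat) : ereal :=
  match n with
  | O => Fin 0
  | S k => eadd (esum_n f k) (f k)
  end.

Fixpoint rsum_n (f : nat -> R) (n : nat) : R :=
  match n with
  | O => 0
  | S k => rsum_n f k + f k
  end.

Record cone : Type := Cone {
  carrier :> Type;
  cadd : carrier -> carrier -> carrier;
  czero : carrier;
  csmul : R -> carrier -> carrier;
  cadd_assoc : forall x y z, cadd x (cadd y z) = cadd (cadd x y) z;
  cadd_comm : forall x y, cadd x y = cadd y x;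
  cadd_0 : forall x, cadd czero x = x;
  csmul_addr : forall r x y, 0 <= r -> csmul r (cadd x y) = cadd (csmul r x) (csmul r y);
  csmul_addl : forall r s x, 0 <= r -> 0 <= s -> csmul (r + s) x = cadd (csmul r x) (csmul s x);
  csmul_mul : forall r s x, 0 <= r -> 0 <= s -> csmul (r * s) x = csmul r (csmul s x);
  csmul_1 : forall x, csmul 1 x = x;
  csmul_0 : forall x, csmul 0 x = czero
}.


Definition nonneg_functional {D : cone} (phi : D -> ereal) : Prop :=
  forall x, ele (Fin 0) (phi x).

Definition homogeneous {D : cone} (phi : D -> ereal) : Prop :=
  forall a r, 0 <= r -> phi (csmul D r a) = emul r (phi a).

Definition additive {D : cone} (phi : D -> ereal) : Prop :=
  forall a b, phi (cadd D a b) = eadd (phi a) (phi b).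

Definition subadditive {D : cone} (phi : D -> ereal) : Prop :=
  forall a b, ele (phi (cadd D a b)) (eadd (phi a) (phi b)).

Definition linear_functional {D : cone} (phi : D -> ereal) : Prop :=
  nonneg_functional phi /\ homogeneous phi /\ additive phi.

Definition sublinear_functional {D : cone} (phi : D -> ereal) : Prop :=
  nonneg_functional phi /\ homogeneous phi /\ subadditive phi.

(* Induction on the number of functionals.  The set E of points where
   psi_0, ..., psi_(n-3) all exceed phi is closed under addition and positive
   scaling, and on E we have min(psi_(n-2), psi_(n-1)) <= phi.  For two linear
   functionals p, q with min(p, q) <= phi on such a set, one weight l in [0,1]
   gives l p + (1 - l) q <= phi on all of E: if p or q is infinite at a point
   where phi is finite, the other one alone works; otherwise each point imposes
   a bound on l through the ratio (q - phi) / (q - p), and evaluating the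
   hypothesis at a positive combination of two points shows that all lower
   bounds lie below all upper bounds.  Replacing psi_(n-2), psi_(n-1) by that
   convex combination lowers n by one. *)

From Stdlib Require Import Reals Lra Lia Classical.
Open Scope R_scope.

Ltac destruct_Rlt_dec := repeat match goal with
  | |- context [Rlt_dec ?a ?b] => destruct (Rlt_dec a b)
  | H : context [Rlt_dec ?a ?b] |- _ => destruct (Rlt_dec a b)
  end.

Lemma ele_trans x y z : ele x y -> ele y z -> ele x z.
Proof. destruct x, y, z; simpl; auto; try lra; tauto. Qed.

Lemma ele_emin_iff a b v : ele (emin a b) v <-> ele a v \/ ele b v.
Proof.
  destruct a, b, v; simpl; try tauto.
  unfold Rmin; destruct (Rle_dec r r0); lra.
Qed.

Lemma eadd_0_l v : eadd (Fin 0) v = v.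
Proof. destruct v; simpl; auto; f_equal; ring. Qed.

Lemma eadd_0_r v : eadd v (Fin 0) = v.
Proof. destruct v; simpl; auto; f_equal; ring. Qed.

Lemma eadd_Inf_r u : eadd u Inf = Inf.
Proof. destruct u; auto. Qed.

Lemma eadd_assoc u v w : eadd u (eadd v w) = eadd (eadd u v) w.
Proof. destruct u, v, w; simpl; auto; f_equal; ring. Qed.

Lemma eadd_addACA a b c d : eadd (eadd a b) (eadd c d) = eadd (eadd a c) (eadd b d).
Proof. destruct a, b, c, d; simpl; auto; f_equal; ring. Qed.

Lemma eadd_mono a b c d : ele a b -> ele c d -> ele (eadd a c) (eadd b d).
Proof. destruct a, b, c, d; simpl; auto; lra. Qed.

Lemma emul_Inf r : 0 < r -> emul r Inf = Inf.
Proof. intros; simpl; destruct_Rlt_dec; auto; lra. Qed.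

Lemma emul_0 x : emul 0 x = Fin 0.
Proof. destruct x; simpl; destruct_Rlt_dec; try lra; auto; f_equal; ring. Qed.

Lemma emul_1 x : emul 1 x = x.
Proof. destruct x; simpl; destruct_Rlt_dec; try lra; auto; f_equal; ring. Qed.

Lemma emul_mono r u w : 0 <= r -> ele u w -> ele (emul r u) (emul r w).
Proof.
  intros Hr; destruct u, w; simpl; destruct_Rlt_dec; simpl; try tauto; try nra.
  intros; replace r with 0 by lra; lra.
Qed.

Lemma emul_addl r s w :
  0 <= r -> 0 <= s -> emul (r + s) w = eadd (emul r w) (emul s w).
Proof. intros; destruct w; simpl; destruct_Rlt_dec; simpl; auto; try lra; f_equal; lra. Qed.

Lemma emul_mul r s w : 0 <= r -> 0 <= s -> emul (r * s) w = emul r (emul s w).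
Proof.
  intros; destruct w; simpl; destruct_Rlt_dec; simpl; destruct_Rlt_dec;
    auto; try (f_equal; ring); nra.
Qed.

Lemma emul_eadd r u v : 0 <= r -> emul r (eadd u v) = eadd (emul r u) (emul r v).
Proof.
  intros; destruct u, v; simpl; destruct_Rlt_dec; simpl; auto; f_equal;
    try ring; replace r with 0 by lra; ring.
Qed.

Lemma ele0_emul r u : 0 <= r -> ele (Fin 0) u -> ele (Fin 0) (emul r u).
Proof. intros; destruct u; simpl in *; destruct_Rlt_dec; simpl; auto; nra. Qed.

Lemma ele0_eadd u v : ele (Fin 0) u -> ele (Fin 0) v -> ele (Fin 0) (eadd u v).
Proof. destruct u, v; simpl; auto; lra. Qed.

Lemma not_ele_eadd a b c d e :
  ~ ele a c -> ~ ele b d -> ele e (eadd c d) -> ~ ele (eadd a b) e.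
Proof. destruct a, b, c, d, e; simpl; auto; lra. Qed.

Lemma not_ele_emul r a c : 0 < r -> ~ ele a c -> ~ ele (emul r a) (emul r c).
Proof. intros Hr; destruct a, c; simpl; destruct_Rlt_dec; simpl; auto; try lra; nra. Qed.

Lemma ele_eadd_r u v : ele (Fin 0) v -> ele u (eadd u v).
Proof. destruct u, v; simpl; auto; lra. Qed.

(* [fine Inf = 0] is a junk value: [fine] is only applied to finite values. *)
Definition fine (u : ereal) : R := match u with Fin r => r | Inf => 0 end.

Lemma fine_eq u : u <> Inf -> u = Fin (fine u).
Proof. destruct u; simpl; congruence. Qed.

Lemma fine_eadd u v : u <> Inf -> v <> Inf -> fine (eadd u v) = fine u + fine v.
Proof. destruct u, v; simpl; congruence. Qed.

Lemma fine_emul r u : fine (emul r u) = r * fine u.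
Proof. destruct u; simpl; destruct_Rlt_dec; simpl; ring. Qed.

Lemma fine_mono u v : ele u v -> v <> Inf -> fine u <= fine v.
Proof. destruct u, v; simpl; tauto. Qed.

Lemma ele_emin_n_iff f n v :
  ele (emin_n f (S n)) v <-> exists i, (i <= n)%nat /\ ele (f i) v.
Proof.
  induction n as [|n IHn];
    [change (emin_n f 1) with (emin Inf (f 0%nat))
    |change (emin_n f (S (S n))) with (emin (emin_n f (S n)) (f (S n)))];
    rewrite ele_emin_iff.
  - split.
    + intros [H|H]; exists 0%nat; split; auto.
      destruct v; [contradiction|destruct (f 0%nat); exact I].
    + intros [i [Hi H]]; replace i with 0%nat in H by lia; auto.
  - rewrite IHn; split.
    + intros [[i [Hi H]]|H]; [exists i|exists (S n)]; split; auto; lia.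
    + intros [i [Hi H]]; destruct (Nat.eq_dec i (S n)) as [->|Hne]; auto.
      left; exists i; split; auto; lia.
Qed.

Lemma esum_n_ext f g n :
  (forall i, (i < n)%nat -> f i = g i) -> esum_n f n = esum_n g n.
Proof. induction n; simpl; intros H; auto; rewrite IHn, H; auto. Qed.

Lemma rsum_n_ext f g n :
  (forall i, (i < n)%nat -> f i = g i) -> rsum_n f n = rsum_n g n.
Proof. induction n; simpl; intros H; auto; rewrite IHn, H; auto. Qed.

Lemma rsum_n_ge0 a n : (forall i, (i < n)%nat -> 0 <= a i) -> 0 <= rsum_n a n.
Proof.
  induction n; simpl; intros H; [lra|].
  assert (0 <= a n) by (apply H; lia).
  assert (0 <= rsum_n a n) by (apply IHn; intros; apply H; lia).
  lra.
Qed.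

Lemma emul_emin_n_ele_esum_n (a : nat -> R) (v : nat -> ereal) n :
  (forall i, (i < n)%nat -> 0 <= a i) ->
  ele (emul (rsum_n a n) (emin_n v n)) (esum_n (fun i => emul (a i) (v i)) n).
Proof.
  induction n as [|n IHn]; simpl; intros Ha.
  - destruct_Rlt_dec; simpl; lra.
  - rewrite emul_addl by (apply rsum_n_ge0 + apply Ha; intros; try apply Ha; lia).
    apply eadd_mono.
    + eapply ele_trans; [apply emul_mono|apply IHn; intros; apply Ha; lia].
      * apply rsum_n_ge0; intros; apply Ha; lia.
      * apply ele_emin_iff; left; destruct (emin_n v n); simpl; auto; lra.
    + apply emul_mono; [apply Ha; lia|].
      apply ele_emin_iff; right; destruct (v n); simpl; auto; lra.
Qed.

Definition subcone {D : cone} (E : D -> Prop) : Prop :=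
  (forall x y, E x -> E y -> E (cadd D x y)) /\
  (forall r x, 0 < r -> E x -> E (csmul D r x)).

Lemma subcone_forall {D : cone} (I : Type) (Q : I -> Prop) (E : I -> D -> Prop) :
  (forall i, Q i -> subcone (E i)) -> subcone (fun x => forall i, Q i -> E i x).
Proof.
  intros HE; split.
  - intros x y Ex Ey i Qi; apply (proj1 (HE i Qi)); auto.
  - intros r x Hr Ex i Qi; apply (proj2 (HE i Qi)); auto.
Qed.

Lemma exists_between (A B : R -> Prop) :
  (exists a, A a) -> (exists b, B b) -> (forall a b, A a -> B b -> a <= b) ->
  exists l, (forall a, A a -> a <= l) /\ (forall b, B b -> l <= b).
Proof.
  intros HA [b0 Hb0] HAB.
  destruct (completeness A (ex_intro _ b0 (fun a Ha => HAB a b0 Ha Hb0)) HA)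
    as [l [Hub Hleast]].
  exists l; split; [exact Hub|].
  intros b Hb; apply Hleast; intros a Ha; exact (HAB a b Ha Hb).
Qed.

Section ConvexWeight.

Variables (D : cone) (P : D -> Prop) (g h : D -> R).
Hypothesis P_subcone : subcone P.
Hypothesis g_superadd : forall x y, P x -> P y -> g x + g y <= g (cadd D x y).
Hypothesis h_superadd : forall x y, P x -> P y -> h x + h y <= h (cadd D x y).
Hypothesis g_scale : forall r x, 0 < r -> P x -> g (csmul D r x) = r * g x.
Hypothesis h_scale : forall r x, 0 < r -> P x -> h (csmul D r x) = r * h x.
Hypothesis g_or_h_le0 : forall x, P x -> g x <= 0 \/ h x <= 0.

(* Evaluate at [(h y - g y) x + (g x - h x) y]: both values would be positive. *)
Lemma cross_le : forall x y, P x -> P y -> 0 < g x -> 0 < h y ->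
  g x * h y <= h x * g y.
Proof.
  intros x y Px Py gx hy; destruct P_subcone as [P_add P_scale].
  assert (hx : h x <= 0) by (destruct (g_or_h_le0 x Px); lra).
  assert (gy : g y <= 0) by (destruct (g_or_h_le0 y Py); lra).
  apply Rnot_lt_le; intro Hlt.
  set (a := h y - g y); set (b := g x - h x).
  assert (a0 : 0 < a) by (unfold a; lra).
  assert (b0 : 0 < b) by (unfold b; lra).
  set (z := cadd D (csmul D a x) (csmul D b y)).
  assert (Pax := P_scale a x a0 Px); assert (Pby := P_scale b y b0 Py).
  assert (gz : a * g x + b * g y <= g z).
  { rewrite <- g_scale, <- (g_scale b) by assumption; apply g_superadd; assumption. }
  assert (hz : a * h x + b * h y <= h z).
  { rewrite <- h_scale, <- (h_scale b) by assumption; apply h_superadd; assumption. }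
  destruct (g_or_h_le0 z (P_add _ _ Pax Pby)); unfold a, b in *; nra.
Qed.

(* The weight [l] must satisfy [l * (h x - g x) >= h x]: a lower bound
   [h x / (h x - g x)] where [h x > 0], an upper bound where [g x > 0]. *)
Lemma exists_convex_weight :
  exists l, 0 <= l <= 1 /\ forall x, P x -> l * g x + (1 - l) * h x <= 0.
Proof.
  set (ratio := fun x => h x / (h x - g x)).
  assert (ratio_eq : forall x, h x - g x <> 0 -> ratio x * (h x - g x) = h x)
    by (intros; unfold ratio; field; assumption).
  destruct (exists_between
    (fun t => t = 0 \/ exists y, P y /\ 0 < h y /\ t = ratio y)
    (fun t => t = 1 \/ exists x, P x /\ 0 < g x /\ t = ratio x))
    as [l [Hlow Hup]].
  - exists 0; auto.
  - exists 1; auto.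
  - intros s t [->|[y [Py [hy ->]]]] [->|[x [Px [gx ->]]]].
    + lra.
    + assert (h x <= 0) by (destruct (g_or_h_le0 x Px); lra).
      assert (E := ratio_eq x ltac:(lra)); nra.
    + assert (g y <= 0) by (destruct (g_or_h_le0 y Py); lra).
      assert (E := ratio_eq y ltac:(lra)); nra.
    + assert (g y <= 0) by (destruct (g_or_h_le0 y Py); lra).
      assert (h x <= 0) by (destruct (g_or_h_le0 x Px); lra).
      assert (C := cross_le x y Px Py gx hy).
      assert (Ex := ratio_eq x ltac:(lra)); assert (Ey := ratio_eq y ltac:(lra)).
      apply Rnot_lt_le; intro Hlt.
      assert (0 < (ratio y - ratio x) * ((h y - g y) * (g x - h x))).
      { apply Rmult_lt_0_compat; [lra|apply Rmult_lt_0_compat; lra]. }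
      nra.
  - assert (l0 : 0 <= l) by (apply Hlow; auto).
    assert (l1 : l <= 1) by (apply Hup; auto).
    exists l; split; [lra|]; intros x Px.
    destruct (Rlt_le_dec 0 (g x)) as [gx|gx]; [|destruct (Rlt_le_dec 0 (h x)) as [hx|hx]].
    + assert (h x <= 0) by (destruct (g_or_h_le0 x Px); lra).
      assert (L := Hup _ (or_intror (ex_intro _ x (conj Px (conj gx eq_refl))))).
      assert (E := ratio_eq x ltac:(lra)); nra.
    + assert (L := Hlow _ (or_intror (ex_intro _ x (conj Px (conj hx eq_refl))))).
      assert (E := ratio_eq x ltac:(lra)); nra.
    + nra.
Qed.

End ConvexWeight.

Section Gap.

Variable D : cone.
Variable phi : D -> ereal.
Hypothesis phi_sublinear : sublinear_functional phi.

Lemma subcone_not_ele (p : D -> ereal) :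
  linear_functional p -> subcone (fun x => ~ ele (p x) (phi x)).
Proof.
  destruct phi_sublinear as [_ [phi_hom phi_sub]]; intros [_ [p_hom p_add]]; split.
  - intros x y Hx Hy; rewrite p_add; eapply not_ele_eadd; eauto.
  - intros r x Hr Hx; rewrite p_hom, phi_hom by lra; apply not_ele_emul; auto.
Qed.

Lemma subcone_finite (E : D -> Prop) :
  subcone E -> subcone (fun x => E x /\ phi x <> Inf).
Proof.
  destruct phi_sublinear as [_ [phi_hom phi_sub]]; intros [E_add E_scale]; split.
  - intros x y [Ex Fx] [Ey Fy]; split; auto; intro Hxy.
    assert (S := phi_sub x y); rewrite Hxy, (fine_eq _ Fx), (fine_eq _ Fy) in S.
    exact S.
  - intros r x Hr [Ex Fx]; split; auto.
    rewrite phi_hom, (fine_eq _ Fx) by lra; discriminate.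
Qed.

Definition gap (p : D -> ereal) (x : D) : R := fine (p x) - fine (phi x).

Lemma gap_superadd (p : D -> ereal) x y :
  additive p -> p x <> Inf -> p y <> Inf -> phi x <> Inf -> phi y <> Inf ->
  gap p x + gap p y <= gap p (cadd D x y).
Proof.
  destruct phi_sublinear as [_ [_ phi_sub]]; intros p_add px py fx fy.
  unfold gap; rewrite p_add, fine_eadd by assumption.
  assert (fine (phi (cadd D x y)) <= fine (phi x) + fine (phi y)).
  { rewrite <- fine_eadd by assumption.
    apply fine_mono; [apply phi_sub|].
    rewrite (fine_eq _ fx), (fine_eq _ fy); discriminate. }
  lra.
Qed.

Lemma gap_scale (p : D -> ereal) r x :
  homogeneous p -> 0 <= r -> gap p (csmul D r x) = r * gap p x.
Proof.
  destruct phi_sublinear as [_ [phi_hom _]]; intros p_hom Hr.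
  unfold gap; rewrite p_hom, phi_hom, !fine_emul by assumption; ring.
Qed.

End Gap.

Section TwoFunctionals.

Variables (D : cone) (phi : D -> ereal) (E : D -> Prop) (p1 p2 : D -> ereal).
Hypothesis phi_sublinear : sublinear_functional phi.
Hypothesis p1_linear : linear_functional p1.
Hypothesis p2_linear : linear_functional p2.
Hypothesis E_subcone : subcone E.
Hypothesis p1_or_p2_ele : forall x, E x -> ele (p1 x) (phi x) \/ ele (p2 x) (phi x).

(* At [x + t x0] the functional [p1] is infinite while [phi] stays finite,
   so [p2 x + t p2 x0 <= phi x + t phi x0]; let [t] tend to 0. *)
Lemma ele_of_Inf_l x0 : E x0 -> phi x0 <> Inf -> p1 x0 = Inf ->
  forall x, E x -> ele (p2 x) (phi x).
Proof.
  destruct phi_sublinear as [phi_ge0 [phi_hom phi_sub]].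
  destruct p1_linear as [_ [p1_hom p1_add]].
  destruct p2_linear as [p2_ge0 [p2_hom p2_add]].
  intros E0 F0 I0 x Ex.
  destruct (phi x) as [r|] eqn:Fx; [|destruct (p2 x); exact I].
  destruct (phi x0) as [f0|] eqn:Ff0; [|congruence].
  assert (f0_ge0 : 0 <= f0)
    by (specialize (phi_ge0 x0); rewrite Ff0 in phi_ge0; exact phi_ge0).
  assert (bound : forall t, 0 < t -> ele (p2 x) (Fin (r + t * f0))).
  { intros t Ht.
    set (z := cadd D x (csmul D t x0)).
    assert (Ez : E z) by (apply (proj1 E_subcone); auto; apply (proj2 E_subcone); auto).
    assert (phi_z : ele (phi z) (Fin (r + t * f0))).
    { assert (S := phi_sub x (csmul D t x0)); fold z in S.
      rewrite phi_hom, Fx, Ff0 in S by lra; exact S. }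
    assert (p1_z : p1 z = Inf).
    { unfold z; rewrite p1_add, p1_hom, I0, emul_Inf by lra; apply eadd_Inf_r. }
    destruct (p1_or_p2_ele z Ez) as [H|H].
    - rewrite p1_z in H; destruct (phi z); simpl in *; tauto.
    - unfold z in H; rewrite p2_add, p2_hom in H by lra.
      eapply ele_trans; [|eapply ele_trans; [exact H|exact phi_z]].
      apply ele_eadd_r, ele0_emul; [lra|apply p2_ge0]. }
  destruct (p2 x) as [v|] eqn:Hv; [|exact (bound 1 ltac:(lra))].
  apply Rle_plus_epsilon; intros eps Heps.
  assert (B := bound (eps / (f0 + 1)) ltac:(apply Rdiv_lt_0_compat; lra)); simpl in B.
  assert (eps / (f0 + 1) * (f0 + 1) = eps) by (field; lra).
  assert (0 < eps / (f0 + 1)) by (apply Rdiv_lt_0_compat; lra).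
  lra.
Qed.

Lemma exists_weight_finite :
  (forall x, E x -> phi x <> Inf -> p1 x <> Inf /\ p2 x <> Inf) ->
  exists l, 0 <= l <= 1 /\
    forall x, E x -> ele (eadd (emul l (p1 x)) (emul (1 - l) (p2 x))) (phi x).
Proof.
  intros fin_E.
  destruct p1_linear as [_ [p1_hom p1_add]]; destruct p2_linear as [_ [p2_hom p2_add]].
  set (P := fun x => E x /\ phi x <> Inf).
  destruct (exists_convex_weight D P (gap D phi p1) (gap D phi p2)) as [l [Hl Hle]].
  - exact (subcone_finite D phi phi_sublinear E E_subcone).
  - intros x y [Ex Fx] [Ey Fy]; apply gap_superadd; auto; apply fin_E; assumption.
  - intros x y [Ex Fx] [Ey Fy]; apply gap_superadd; auto; apply fin_E; assumption.
  - intros r x Hr _; apply gap_scale; auto; lra.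
  - intros r x Hr _; apply gap_scale; auto; lra.
  - intros x [Ex Fx].
    destruct (p1_or_p2_ele x Ex) as [H|H]; [left|right]; unfold gap;
      apply Rle_minus, fine_mono; assumption.
  - exists l; split; [exact Hl|]; intros x Ex.
    destruct (phi x) as [r|] eqn:Fx; [|destruct (eadd _ _); exact I].
    assert (Px : P x) by (split; [exact Ex|rewrite Fx; discriminate]).
    destruct (fin_E x Ex ltac:(rewrite Fx; discriminate)) as [F1 F2].
    assert (L := Hle x Px); unfold gap in L; rewrite Fx in L.
    rewrite (fine_eq _ F1), (fine_eq _ F2); simpl in *; lra.
Qed.

End TwoFunctionals.

Lemma exists_convex_comb_dominated (D : cone) (phi : D -> ereal) (E : D -> Prop)
    (p1 p2 : D -> ereal) :
  sublinear_functional phi -> linear_functional p1 -> linear_functional p2 ->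
  subcone E -> (forall x, E x -> ele (p1 x) (phi x) \/ ele (p2 x) (phi x)) ->
  exists l, 0 <= l <= 1 /\
    forall x, E x -> ele (eadd (emul l (p1 x)) (emul (1 - l) (p2 x))) (phi x).
Proof.
  intros phi_sub p1_lin p2_lin E_sub p12.
  destruct (classic (exists x0, E x0 /\ phi x0 <> Inf /\ p1 x0 = Inf))
    as [[x0 [E0 [F0 I0]]]|no_Inf1].
  { exists 0; split; [lra|]; intros x Ex.
    rewrite emul_0, Rminus_0_r, emul_1, eadd_0_l.
    exact (ele_of_Inf_l D phi E p1 p2 phi_sub p1_lin p2_lin E_sub p12 x0 E0 F0 I0 x Ex). }
  destruct (classic (exists x0, E x0 /\ phi x0 <> Inf /\ p2 x0 = Inf))
    as [[x0 [E0 [F0 I0]]]|no_Inf2].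
  { exists 1; split; [lra|]; intros x Ex.
    rewrite Rminus_diag, emul_0, emul_1, eadd_0_r.
    refine (ele_of_Inf_l D phi E p2 p1 phi_sub p2_lin p1_lin E_sub _ x0 E0 F0 I0 x Ex).
    intros y Ey; apply or_comm; auto. }
  apply exists_weight_finite; auto.
  intros x Ex Fx; split; intro Hi; [apply no_Inf1|apply no_Inf2]; exists x; auto.
Qed.

Lemma linear_convex_comb (D : cone) (p1 p2 : D -> ereal) l : 0 <= l <= 1 ->
  linear_functional p1 -> linear_functional p2 ->
  linear_functional (fun x => eadd (emul l (p1 x)) (emul (1 - l) (p2 x))).
Proof.
  intros Hl [p1_ge0 [p1_hom p1_add]] [p2_ge0 [p2_hom p2_add]]; split; [|split].
  - intro x; apply ele0_eadd; apply ele0_emul; auto; lra.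
  - intros a r Hr; rewrite p1_hom, p2_hom, emul_eadd by auto.
    rewrite <- !emul_mul by lra; rewrite (Rmult_comm l), (Rmult_comm (1 - l)).
    reflexivity.
  - intros a b; rewrite p1_add, p2_add, !emul_eadd by lra; apply eadd_addACA.
Qed.

Definition merge_last {D : cone} (l : R) (psi : nat -> D -> ereal) (n : nat) :
    nat -> D -> ereal :=
  fun i x => if Nat.eqb i n
             then eadd (emul l (psi n x)) (emul (1 - l) (psi (S n) x))
             else psi i x.

Definition split_last (l : R) (b : nat -> R) (n : nat) : nat -> R :=
  fun i => if Nat.eqb i n then b n * l
           else if Nat.eqb i (S n) then b n * (1 - l) else b i.

Lemma split_last_lt l b n i : (i < n)%nat -> split_last l b n i = b i.
Proof.
  intros Hi; unfold split_last.
  rewrite (proj2 (Nat.eqb_neq i n)), (proj2 (Nat.eqb_neq i (S n))) by lia.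
  reflexivity.
Qed.

Lemma split_last_ge0 l b n : 0 <= l <= 1 ->
  (forall i, (i <= n)%nat -> 0 <= b i) ->
  forall i, (i < S (S n))%nat -> 0 <= split_last l b n i.
Proof.
  intros Hl Hb i Hi; assert (0 <= b n) by (apply Hb; lia).
  destruct (Nat.lt_ge_cases i n); [rewrite split_last_lt; auto; apply Hb; lia|].
  unfold split_last; destruct (Nat.eqb_spec i n); [apply Rmult_le_pos; lra|].
  destruct (Nat.eqb_spec i (S n)); [apply Rmult_le_pos; lra|lia].
Qed.

Lemma rsum_n_split_last l b n :
  rsum_n (split_last l b n) (S (S n)) = rsum_n b (S n).
Proof.
  cbn [rsum_n]; rewrite (rsum_n_ext _ b n) by (intros; apply split_last_lt; auto).
  unfold split_last; rewrite Nat.eqb_refl, (proj2 (Nat.eqb_neq (S n) n)),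
    Nat.eqb_refl by lia.
  ring.
Qed.

Lemma esum_n_split_last {D : cone} l b n (psi : nat -> D -> ereal) x :
  0 <= l <= 1 -> 0 <= b n ->
  esum_n (fun i => emul (split_last l b n i) (psi i x)) (S (S n)) =
  esum_n (fun i => emul (b i) (merge_last l psi n i x)) (S n).
Proof.
  intros Hl Hb; cbn [esum_n].
  rewrite (esum_n_ext _ (fun i => emul (b i) (merge_last l psi n i x)) n).
  2: { intros i Hi; rewrite split_last_lt by auto; unfold merge_last.
       rewrite (proj2 (Nat.eqb_neq i n)) by lia; reflexivity. }
  unfold split_last, merge_last; rewrite Nat.eqb_refl, (proj2 (Nat.eqb_neq (S n) n)),
    Nat.eqb_refl by lia.
  rewrite !emul_mul, <- eadd_assoc, <- emul_eadd by lra.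
  reflexivity.
Qed.

Lemma merge_last_lt {D : cone} l (psi : nat -> D -> ereal) n i :
  (i < n)%nat -> merge_last l psi n i = psi i.
Proof.
  intros Hi; unfold merge_last; rewrite (proj2 (Nat.eqb_neq i n)) by lia.
  reflexivity.
Qed.

Lemma exists_convex_comb_dominated_n (D : cone) (phi : D -> ereal) :
  sublinear_functional phi -> forall n (psi : nat -> D -> ereal),
  (forall i, (i < S n)%nat -> linear_functional (psi i)) ->
  (forall x, ele (emin_n (fun i => psi i x) (S n)) (phi x)) ->
  exists a : nat -> R,
    (forall i, (i < S n)%nat -> 0 <= a i) /\ rsum_n a (S n) = 1 /\
    forall x, ele (esum_n (fun i => emul (a i) (psi i x)) (S n)) (phi x).
Proof.
  intros phi_sub; induction n as [|n IHn]; intros psi psi_lin psi_min.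
  { exists (fun _ => 1); split; [intros; lra|split; [simpl; lra|]].
    intros x; cbn [esum_n]; rewrite emul_1, eadd_0_l; exact (psi_min x). }
  set (E := fun x => forall i, (i < n)%nat -> ~ ele (psi i x) (phi x)).
  assert (E_sub : subcone E).
  { apply subcone_forall; intros i Hi; apply subcone_not_ele; auto; apply psi_lin; lia. }
  assert (last_two : forall x, E x ->
            ele (psi n x) (phi x) \/ ele (psi (S n) x) (phi x)).
  { intros x Ex; destruct (proj1 (ele_emin_n_iff _ _ _) (psi_min x)) as [i [Hi Hle]].
    destruct (Nat.lt_ge_cases i n) as [Hlt|Hge]; [exfalso; exact (Ex i Hlt Hle)|].
    destruct (Nat.eq_dec i n) as [<-|Hne]; [left|right; replace (S n) with i by lia].
    all: exact Hle. }
  destruct (exists_convex_comb_dominated D phi E (psi n) (psi (S n)) phi_sub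
              (psi_lin n ltac:(lia)) (psi_lin (S n) ltac:(lia)) E_sub last_two)
    as [l [Hl Hcomb]].
  destruct (IHn (merge_last l psi n)) as [b [b_ge0 [b_sum b_dom]]].
  - intros i Hi; destruct (Nat.lt_ge_cases i n).
    + rewrite merge_last_lt by auto; apply psi_lin; lia.
    + replace i with n by lia; unfold merge_last; rewrite Nat.eqb_refl.
      apply linear_convex_comb; auto; apply psi_lin; lia.
  - intros x; apply ele_emin_n_iff.
    destruct (classic (E x)) as [Ex|nEx].
    + exists n; split; [lia|]; unfold merge_last; rewrite Nat.eqb_refl; auto.
    + apply not_all_ex_not in nEx; destruct nEx as [i Hi].
      apply imply_to_and in Hi; destruct Hi as [Hi Hle]; apply NNPP in Hle.
      exists i; split; [lia|]; rewrite merge_last_lt; auto.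
  - assert (bn : 0 <= b n) by (apply b_ge0; lia).
    exists (split_last l b n); split; [|split].
    + apply split_last_ge0; auto; intros i Hi; apply b_ge0; lia.
    + rewrite rsum_n_split_last; exact b_sum.
    + intros x; rewrite esum_n_split_last by auto; apply b_dom.
Qed.

Theorem proposition2p8 (D : cone) (phi : D -> ereal) (n : nat)
  (psi : nat -> D -> ereal) :
  (1 <= n)%nat ->
  sublinear_functional phi ->
  (forall i, (i < n)%nat -> linear_functional (psi i)) ->
  (forall x, ele (emin_n (fun i => psi i x) n) (phi x)) ->
  exists a : nat -> R,
    (forall i, (i < n)%nat -> 0 <= a i) /\
    rsum_n a n = 1 /\
    forall x,
      ele (emin_n (fun i => psi i x) n) (esum_n (fun i => emul (a i) (psi i x)) n) /\
      ele (esum_n (fun i => emul (a i) (psi i x)) n) (phi x).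
Proof.
  intros Hn phi_sub psi_lin psi_min; destruct n as [|m]; [lia|].
  destruct (exists_convex_comb_dominated_n D phi phi_sub m psi psi_lin psi_min)
    as [a [a_ge0 [a_sum a_dom]]].
  exists a; split; [exact a_ge0|split; [exact a_sum|]]; intros x; split; [|apply a_dom].
  rewrite <- (emul_1 (emin_n _ _)), <- a_sum.
  apply emul_emin_n_ele_esum_n; exact a_ge0.
Qed.
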